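(* Let $(B,\mathfrak{m})$ be a deformation base, $X$ a vector space and $M\subseteq B\widehat{\otimes}X$ a $B$-submodule. Then the following are equivalent: (i) $M$ is quasi-flat and pseudoclosed; (ii) there exist a vector space $Y$ and a $B$-linear isomorphism $\varphi:B\widehat{\otimes}Y\to M$ whose leading term $\pi\circ\varphi|_Y:Y\to X$ is injective.
   Context: Deformation base: complete local Noetherian unital $\mathbb{C}$-algebra $B$ with maximal ideal $\mathfrak{m}$, $B/\mathfrak{m}=\mathbb{C}$. $B\widehat{\otimes}X=\varprojlim(B/\mathfrak{m}^k\otimes X)$; $\pi:B\widehat{\otimes}X\to X$ the canonical projection; $\mathfrak{m}X$ the image of $\mathfrak{m}\widehat{\otimes}X$. For a subspace $Z\subseteq B\widehat{\otimes}X$: $BZ=\{\sum_ib_iz_i:z_i\in Z,b_i\in\mathfrak{m}^{k_i},k_i\to\infty\}$ and $\mathfrak{m}Z$ the same with $k_i\ge1$. $M$ is pseudoclosed if $BM\subseteq M$ and quasi-flat if $M\cap\mathfrak{m}X\subseteq\mathfrak{m}M$. *)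

From Stdlib Require Import ClassicalEpsilon.
From mathcomp Require Import all_boot all_algebra.
From mathcomp Require Import complex Rstruct.
Import GRing.Theory.

Set Implicit Arguments.
Unset Strict Implicit.
Unset Printing Implicit Defensive.

Local Open Scope ring_scope.

Definition CC : fieldType := complex Rdefinitions.R.

Section DefBase.
Variable B : comAlgType CC.
Variable m : B -> Prop.

Definition is_ideal (I : B -> Prop) : Prop :=
  I 0 /\ (forall x y, I x -> I y -> I (x + y)) /\ (forall a x, I x -> I (a * x)).

Definition fin_generated (I : B -> Prop) : Prop :=
  exists s : seq B, forall x,
    I x <-> exists r : nat -> B, x = \sum_(i < size s) r i * s`_i.

Fixpoint powm (k : nat) : B -> Prop :=
  match k with
  | 0 => fun _ => True
  | k'.+1 => fun x => exists (n : nat) (a b : nat -> B),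
       (forall i, m (a i) /\ powm k' (b i)) /\ x = \sum_(i < n) a i * b i
  end.

(** (B, m) is a deformation base: a complete local Noetherian unital
    C-algebra with maximal ideal m and residue field B/m = C. *)
Definition deformation_base : Prop :=
  [/\ is_ideal m,
      ~ m 1,
      (forall x, ~ m x -> exists y, x * y = 1),
      (forall x, exists c : CC, m (x - c%:A))
    & (forall I, is_ideal I -> fin_generated I)] /\
  ((forall x, (forall k, powm k x) -> x = 0)
    /\ (forall s : nat -> B,
         (forall K, exists N, forall n p, (N <= n)%N -> (N <= p)%N -> powm K (s n - s p)) ->
         exists l, forall K, exists N, forall n, (N <= n)%N -> powm K (s n - l))).

Definition resid (b : B) : CC := epsilon (inhabits 0) (fun c : CC => m (b - c%:A)).

(** A vector space X is given through a basis
    indexed by a type I, i.e. X = C^(I) (finitely supported functions I -> C);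
    then B (^) X = lim_k (B/m^k (x) X) is the space of functions f : I -> B
    which are m-adically null: for every k, f i lies in m^k for all but
    finitely many i. *)
Definition fin_supp (I : Type) (f : I -> CC) : Prop :=
  exists l : list I, forall i, f i <> 0 -> List.In i l.

Definition cnull (I : Type) (f : I -> B) : Prop :=
  forall k, exists l : list I, forall i, ~ powm k (f i) -> List.In i l.

Definition proj (I : Type) (f : I -> B) : I -> CC := fun i => resid (f i).

Definition incl (I : Type) (x : I -> CC) : I -> B := fun i => (x i)%:A.

Definition is_Bsubmodule (I : Type) (M : (I -> B) -> Prop) : Prop :=
  [/\ forall f, M f -> cnull f,
      M (fun _ => 0),
      (forall f g, M f -> M g -> M (fun i => f i + g i))
    & (forall (b : B) f, M f -> M (fun i => b * f i))].

Definition mseries (I : Type) (Z : (I -> B) -> Prop) (k0 : nat) (w : I -> B) : Prop :=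
  exists (z : nat -> I -> B) (b : nat -> B) (k : nat -> nat),
    [/\ forall n, Z (z n),
        forall n, (k0 <= k n)%N /\ powm (k n) (b n),
        (forall K, exists N, forall n, (N <= n)%N -> (K <= k n)%N)
      & (forall K, exists N, forall n, (N <= n)%N ->
           forall i, powm K (w i - \sum_(l < n) b l * z l i))].

Definition BZ (I : Type) (Z : (I -> B) -> Prop) := mseries Z 0.
Definition mZ (I : Type) (Z : (I -> B) -> Prop) := mseries Z 1.

(** mX = m(B(^)X), the image of m(^)X in B(^)X. *)
Definition mX (I : Type) : (I -> B) -> Prop := mZ (@cnull I).

Definition pseudoclosed (I : Type) (M : (I -> B) -> Prop) : Prop :=
  forall w, BZ M w -> M w.

Definition quasi_flat (I : Type) (M : (I -> B) -> Prop) : Prop :=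
  forall w, M w -> mX w -> mZ M w.

Definition Blin_iso (J I : Type) (phi : (J -> B) -> (I -> B)) (M : (I -> B) -> Prop) : Prop :=
  [/\ forall f, cnull f -> M (phi f),
      (forall f g, cnull f -> cnull g -> phi (fun j => f j + g j) = (fun i => phi f i + phi g i)),
      (forall (b : B) f, cnull f -> phi (fun j => b * f j) = (fun i => b * phi f i)),
      (forall f g, cnull f -> cnull g -> phi f = phi g -> f = g)
    & (forall h, M h -> exists f, cnull f /\ phi f = h)].

Definition leading_injective (J I : Type) (phi : (J -> B) -> (I -> B)) : Prop :=
  forall y1 y2 : J -> CC, fin_supp y1 -> fin_supp y2 ->
    proj (phi (incl y1)) = proj (phi (incl y2)) -> y1 = y2.

End DefBase.

(* (ii) => (i): a B-linear map between completed tensor products is m-adically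
   continuous, since by Noetherianity an m^K-valued null family is a finite
   m^K-combination of null families. Hence m-adic series in M pull back to B(^)Y,
   which gives pseudoclosedness; and an element of M in mX has a preimage whose
   leading term vanishes by injectivity, so it is an m-combination of elements of M.
   (i) => (ii): by Zorn's lemma take S in M maximal with linearly independent
   residues, so that the residues of S span those of M, and let phi send f to the
   m-adic sum of the f(x) x over x in S; it lands in M by pseudoclosedness and its
   leading term is injective by independence. Quasi-flatness turns an element of M
   with zero residues into an m-combination of elements of M, which gives
   surjectivity by successive approximation. For injectivity, an element of the
   kernel lying in m^K lies in m^(K+1): Gaussian elimination over C on the residues
   of S shows that its coefficients there are in m^(K+1). *)

From mathcomp Require Import all_boot all_algebra.
From mathcomp Require Import complex Rstruct.
From mathcomp Require Import ring.
From mathcomp Require Import boolp classical_sets.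
From Stdlib Require Import ClassicalEpsilon.
Import GRing.Theory.

Set Implicit Arguments.
Unset Strict Implicit.
Unset Printing Implicit Defensive.
Local Open Scope ring_scope.

Lemma InP (T : eqType) (x : T) (s : seq T) : reflect (List.In x s) (x \in s).
Proof.
elim: s => [|y s IH] /=; first by constructor.
rewrite inE; apply: (iffP orP) => [[/eqP ->|/IH]|[->|/IH]]; by [left|right|rewrite eqxx|].
Qed.

Lemma big_iota0 (R : nmodType) n (F : nat -> R) :
  \sum_(i <- iota 0 n) F i = \sum_(i < n) F i.
Proof. by rewrite -(subn0 n) -/(index_iota 0 n) big_mkord subn0. Qed.

Lemma big_take_nth (R : nmodType) (A : Type) (x0 : A) (s : seq A) (G : A -> R) N :
  (N <= size s)%N -> \sum_(k < N) G (nth x0 s k) = \sum_(y <- take N s) G y.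
Proof.
move=> hN; rewrite (big_nth x0) size_take_min (minn_idPl hN) big_mkord.
by apply: eq_bigr => k _; rewrite nth_take.
Qed.

Lemma chain_seq_ub (T : eqType) (F : set (set T)) (L : seq T) : total_on F subset ->
  {in L, forall x, bigcup F (fun X => X) x} ->
  L = [::] \/ exists2 X, F X & {in L, forall x, X x}.
Proof.
move=> htot; elim: L => [|a L IH] H; first by left.
right; have [Xa hFa hXa] := H a (mem_head _ _).
case: IH => [x hx|->|[X hFX hX]]; first by apply: H; rewrite inE hx orbT.
  by exists Xa => // x; rewrite inE => /eqP->.
have [hs|hs] := htot _ _ hFa hFX.
  by exists X => // x; rewrite inE => /predU1P[->|/hX]; [exact: hs|].
by exists Xa => // x; rewrite inE => /predU1P[->|/hX/hs].
Qed.

Section LinearIndependence.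
Variables (F : fieldType) (V : lmodType F) (Q : V -> Prop).
Hypothesis Q0 : Q 0.
Hypothesis QD : forall a b, Q a -> Q b -> Q (a + b).
Hypothesis QZ : forall c a, Q a -> Q (c *: a).

Definition linindep (X : eqType) (I : Type) (L : seq X) (v : X -> I -> F) :=
  forall c : X -> F, (forall i, \sum_(x <- L) c x * v x i = 0) -> {in L, forall x, c x = 0}.

Lemma linindep_head (X : eqType) (I : Type) (x0 : X) L (v : X -> I -> F) :
  x0 \notin L -> linindep (x0 :: L) v -> exists i0, v x0 i0 != 0.
Proof.
move=> hx0 hind; apply: contrapT => hn.
have h0 i : v x0 i = 0 by apply/eqP; apply: contrapT => h; apply: hn; exists i; exact/negP.
suff /(_ x0 (mem_head _ _)) : {in x0 :: L, forall x, ((x == x0)%:R : F) = 0}.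
  by rewrite eqxx => /eqP; rewrite oner_eq0.
apply: hind => i; rewrite big_cons h0 mulr0 add0r big_seq big1 // => y hy.
by rewrite (_ : (y == x0) = false) ?mul0r //; apply: contraNF hx0 => /eqP <-.
Qed.

(* One step of Gaussian elimination: subtracting multiples of the i0-th coordinate
   kills the coefficient of x0 and preserves the independence of the others. *)
Lemma linindep_elim (X : eqType) (I : Type) (x0 : X) L (v : X -> I -> F) i0 :
  x0 \notin L -> linindep (x0 :: L) v -> v x0 i0 != 0 ->
  linindep L (fun y i => v y i - v x0 i / v x0 i0 * v y i0).
Proof.
move=> hx0 hind nz c hc.
pose c' y := if y == x0 then - (\sum_(z <- L) c z * v z i0) / v x0 i0 else c y.
have c'E : {in L, c' =1 c}.
  by move=> y hy; rewrite /c'; case: eqP => // e; move: hx0; rewrite -e hy.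
move=> y hy; rewrite -c'E //; apply: hind; last by rewrite inE hy orbT.
move=> i; rewrite big_cons (eq_big_seq (fun z => c z * v z i)); last by move=> z /c'E ->.
rewrite /c' eqxx.
have := hc i; rewrite (eq_bigr (fun z => c z * v z i - v x0 i / v x0 i0 * (c z * v z i0)));
  last by move=> z _; rewrite mulrBr mulrCA.
rewrite sumrB -mulr_sumr => /eqP; rewrite subr_eq0 => /eqP ->.
by field.
Qed.

Lemma linindep_coef (X : eqType) (I : Type) (L : seq X) (v : X -> I -> F) (beta : X -> V) :
  uniq L -> linindep L v -> (forall i, Q (\sum_(x <- L) v x i *: beta x)) ->
  {in L, forall x, Q (beta x)}.
Proof.
have QB a b : Q a -> Q b -> Q (a - b) by move=> ha /(QZ (-1)); rewrite scaleN1r; apply: QD.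
have Qsum (s : seq X) G : {in s, forall x, Q (G x)} -> Q (\sum_(x <- s) G x).
  by move=> H; rewrite big_seq; apply: (big_ind Q).
elim: L v => [|x0 L IH] v //= /andP[hx0 hu] hind hb.
have [i0 nz] := linindep_head hx0 hind.
have hL : {in L, forall y, Q (beta y)}.
  apply: (IH _ hu (linindep_elim hx0 hind nz)) => i.
  have -> : \sum_(y <- L) (v y i - v x0 i / v x0 i0 * v y i0) *: beta y =
      \sum_(y <- x0 :: L) v y i *: beta y -
      (v x0 i / v x0 i0) *: \sum_(y <- x0 :: L) v y i0 *: beta y.
    rewrite !big_cons scalerDr scalerA divfK // opprD addrACA subrr add0r.
    by rewrite scaler_sumr -sumrB; apply: eq_bigr => y _; rewrite scalerBl scalerA.
  by apply: QB; [|apply: QZ]; apply: hb.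
move=> x; rewrite inE => /predU1P[->|/hL//].
have -> : beta x0 = (v x0 i0)^-1 *:
    (\sum_(y <- x0 :: L) v y i0 *: beta y - \sum_(y <- L) v y i0 *: beta y).
  by rewrite big_cons addrK scalerA mulVf // scale1r.
by apply/QZ/QB; [apply: hb|apply: Qsum => y /hL; apply: QZ].
Qed.

End LinearIndependence.

Section Base.
Variable B : comAlgType CC.
Variable m : B -> Prop.
Hypothesis hdb : deformation_base m.

Local Notation P := (powm m).
Local Notation res := (resid m).

Lemma m_ideal : is_ideal m. Proof. by case: hdb => [[]]. Qed.
Lemma m_proper : ~ m 1. Proof. by case: hdb => [[]]. Qed.
Lemma m_resid x : exists c : CC, m (x - c%:A). Proof. by case: hdb => [[]]. Qed.
Lemma noetherian I : is_ideal I -> @fin_generated B I.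
Proof. by case: hdb => [[_ _ _ _ h] _]; apply: h. Qed.
Lemma madic_separated x : (forall k, P k x) -> x = 0.
Proof. by case: hdb => _ [h _]; apply: h. Qed.
Lemma madic_complete (s : nat -> B) :
  (forall K, exists N, forall n p, (N <= n)%N -> (N <= p)%N -> P K (s n - s p)) ->
  exists l, forall K, exists N, forall n, (N <= n)%N -> P K (s n - l).
Proof. by case: hdb => _ [_ h]; apply: h. Qed.

Lemma m0 : m 0. Proof. by case: m_ideal. Qed.
Lemma mD x y : m x -> m y -> m (x + y). Proof. by case: m_ideal => _ []; auto. Qed.
Lemma mMl a x : m x -> m (a * x). Proof. by case: m_ideal => _ []; auto. Qed.
Lemma mMr a x : m x -> m (x * a). Proof. by rewrite mulrC; apply: mMl. Qed.
Lemma mB x y : m x -> m y -> m (x - y).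
Proof. by move=> hx hy; apply: mD => //; rewrite -mulN1r; apply: mMl. Qed.
Lemma m_scale (c : CC) x : m x -> m (c *: x).
Proof. by rewrite -mulr_algl; apply: mMl. Qed.

(** * Powers of the maximal ideal *)

Definition prodsum (Q1 Q2 : B -> Prop) (x : B) :=
  exists s : seq (B * B), {in s, forall y, Q1 y.1 /\ Q2 y.2} /\
    x = \sum_(y <- s) y.1 * y.2.

Lemma prodsum0 Q1 Q2 : prodsum Q1 Q2 0.
Proof. by exists [::]; rewrite big_nil. Qed.

Lemma prodsumD Q1 Q2 x y : prodsum Q1 Q2 x -> prodsum Q1 Q2 y -> prodsum Q1 Q2 (x + y).
Proof.
move=> [s1 [H1 ->]] [s2 [H2 ->]]; exists (s1 ++ s2); split; last by rewrite big_cat.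
by move=> z; rewrite mem_cat => /orP[/H1|/H2].
Qed.

Lemma prodsumMl Q1 Q1' Q2 a x : (forall y, Q1 y -> Q1' (a * y)) ->
  prodsum Q1 Q2 x -> prodsum Q1' Q2 (a * x).
Proof.
move=> Ha [s [H ->]]; exists [seq (a * y.1, y.2) | y <- s]; split.
  by move=> _ /mapP[y /H[h1 h2] ->]; split => //; apply: Ha.
by rewrite big_map mulr_sumr; apply: eq_bigr => y _; rewrite mulrA.
Qed.

Lemma prodsumW (Q1 Q2 Q1' Q2' : B -> Prop) x : (forall y, Q1 y -> Q1' y) ->
  (forall y, Q2 y -> Q2' y) -> prodsum Q1 Q2 x -> prodsum Q1' Q2' x.
Proof. by move=> h1 h2 [s [H ->]]; exists s; split => // y /H[]; auto. Qed.

Lemma prodsum_ideal (Id Q1 Q2 : B -> Prop) x : Id 0 ->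
  (forall a b, Id a -> Id b -> Id (a + b)) ->
  (forall y1 y2, Q1 y1 -> Q2 y2 -> Id (y1 * y2)) -> prodsum Q1 Q2 x -> Id x.
Proof.
move=> h0 hD hM [s [H ->]]; rewrite big_seq; apply: (big_ind Id) => // y /H[]; exact: hM.
Qed.

Lemma powm0 k : P k 0.
Proof.
elim: k => [|k IH] //=; exists 0%N, (fun _ => 0), (fun _ => 0).
by rewrite big_ord0; split => // _; split; [exact: m0|].
Qed.

Lemma powmS k x : P k.+1 x <-> prodsum m (P k) x.
Proof.
split.
- move=> [n [a [b [H ->]]]]; exists [seq (a i, b i) | i <- iota 0 n]; split.
    by move=> _ /mapP[i _ ->]; exact: H.
  by rewrite big_map big_iota0.
- move=> [s [H ->]].
  exists (size s), (fun i => (nth (0, 0) s i).1), (fun i => (nth (0, 0) s i).2); split.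
    move=> i; case: (ltnP i (size s)) => hi; first by apply/H/mem_nth.
    by rewrite nth_default //; split; [exact: m0|exact: powm0].
  by rewrite (big_nth (0, 0)) big_mkord.
Qed.

Lemma powmD k x y : P k x -> P k y -> P k (x + y).
Proof. by case: k => [|k] // /powmS hx /powmS hy; apply/powmS/prodsumD. Qed.

Lemma powmMl k a x : P k x -> P k (a * x).
Proof. by case: k => [|k] // /powmS hx; apply/powmS; apply: prodsumMl hx => y; apply: mMl. Qed.

Lemma powmMr k a x : P k x -> P k (x * a).
Proof. by rewrite mulrC; apply: powmMl. Qed.

Lemma powmN k x : P k x -> P k (- x).
Proof. by rewrite -mulN1r; apply: powmMl. Qed.

Lemma powmB k x y : P k x -> P k y -> P k (x - y).
Proof. by move=> hx /powmN; apply: powmD. Qed.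

Lemma powm_subC k x y : P k (x - y) -> P k (y - x).
Proof. by move=> /powmN; rewrite opprB. Qed.

Lemma powm_subtrans k x y z : P k (x - y) -> P k (y - z) -> P k (x - z).
Proof. by move=> h1 h2; rewrite -[x](subrK y) -addrA; apply: powmD. Qed.

Lemma powm_sum k (T : eqType) (s : seq T) (F : T -> B) :
  (forall x, x \in s -> P k (F x)) -> P k (\sum_(x <- s) F x).
Proof. by move=> H; rewrite big_seq; apply: (big_ind (P k)) => //; [exact: powm0|exact: powmD]. Qed.

Lemma powm_sum_ord k n (F : 'I_n -> B) : (forall i, P k (F i)) -> P k (\sum_(i < n) F i).
Proof. by move=> H; apply: (big_ind (P k)) => //; [exact: powm0|exact: powmD]. Qed.

Lemma powm_ideal k : is_ideal (P k).
Proof. by split; [exact: powm0|split; [exact: powmD|exact: powmMl]]. Qed.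

Lemma powm1 x : P 1 x <-> m x.
Proof.
split => [/powmS|h].
  by apply: prodsum_ideal; [exact: m0|exact: mD|move=> y1 y2 h _; exact: mMr].
by apply/powmS; exists [:: (x, 1)]; split; [move=> y; rewrite inE => /eqP->|rewrite big_seq1 mulr1].
Qed.

Lemma powmS_le k x : P k.+1 x -> P k x.
Proof.
elim: k x => [|k IH] x //; move=> /powmS h; apply/powmS; exact: prodsumW h.
Qed.

Lemma powm_le k l x : (k <= l)%N -> P l x -> P k x.
Proof.
move=> /subnK <-; elim: (l - k)%N => [|d IH] // h.
by apply/IH/powmS_le; rewrite -addSn.
Qed.

Lemma powm_mul k l a b : P k a -> P l b -> P (k + l) (a * b).
Proof.
elim: k a => [|k IH] a ha hb; first by rewrite add0n; apply: powmMl.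
rewrite addSn; apply/powmS; move/powmS: ha => [s [H ->]].
exists [seq (y.1, y.2 * b) | y <- s]; split.
  by move=> _ /mapP[y /H[h1 h2] ->]; split => //; apply: IH.
by rewrite big_map mulr_suml; apply: eq_bigr => y _; rewrite mulrA.
Qed.

Lemma powm_mulm k a x : m a -> P k x -> P k.+1 (a * x).
Proof. by move=> /powm1 ha hx; have := powm_mul ha hx; rewrite add1n. Qed.

Lemma powm_split K t x : P (K + t) x -> prodsum (P K) (P t) x.
Proof.
elim: K x => [|K IH] x.
  rewrite add0n => h; exists [:: (1, x)]; split; last by rewrite big_seq1 mul1r.
  by move=> y; rewrite inE => /eqP->.
rewrite addSn => /powmS; apply: prodsum_ideal.
- exact: prodsum0.
- by move=> ? ?; apply: prodsumD.
- move=> y1 y2 h1 /IH; apply: prodsumMl => y; exact: powm_mulm.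
Qed.

Lemma powm_generators K : exists s : seq B, (forall r, P K s`_r) /\
  forall t x, P (K + t) x -> exists c : nat -> B, (forall r, P t (c r)) /\
     x = \sum_(r < size s) s`_r * c r.
Proof.
have [s hs] := noetherian (powm_ideal K); exists s; split.
  move=> r; case: (ltnP r (size s)) => hr; last by rewrite nth_default //; exact: powm0.
  apply/hs; exists (fun i => (i == r)%:R).
  rewrite (bigD1 (Ordinal hr)) //= eqxx mul1r big1 ?addr0 // => j hj.
  by rewrite -val_eqE /= in hj; rewrite (negbTE hj) mul0r.
move=> t x /powm_split [l [Hl ->]].
have /boolp.choice[e he] : forall y : B * B, exists e : nat -> B,
    P K y.1 -> y.1 = \sum_(i < size s) e i * s`_i.
  move=> y; have [/hs[e he]|nK] := pselect (P K y.1); first by exists e.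
  by exists (fun _ => 0) => /nK.
exists (fun r => \sum_(y <- l) e y r * y.2); split.
  by move=> r; apply: powm_sum => y /Hl[_ h2]; apply: powmMl.
rewrite (eq_big_seq (fun y => \sum_(i < size s) s`_i * (e y i * y.2))); last first.
  move=> y /Hl[h1 _]; rewrite {1}(he _ h1) mulr_suml.
  by apply: eq_bigr => i _; rewrite -mulrA mulrCA.
by rewrite exchange_big; apply: eq_bigr => i _; rewrite mulr_sumr.
Qed.

Lemma residP x : m (x - (res x)%:A).
Proof. exact: (epsilon_spec (inhabits (0 : CC)) (fun c : CC => m (x - c%:A)) (m_resid x)). Qed.

Lemma scalar_m (c : CC) : m c%:A -> c = 0.
Proof.
move=> h; apply: contrapT => /eqP hc; apply: m_proper.
have -> : (1 : B) = c^-1%:A * c%:A by rewrite mulr_algl scalerA mulVf // scale1r.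
exact: mMl.
Qed.

Lemma resid_eq x (c : CC) : m (x - c%:A) -> res x = c.
Proof.
move=> h; apply/eqP; rewrite -subr_eq0; apply/eqP/scalar_m.
have -> : (res x - c)%:A = (x - c%:A) - (x - (res x)%:A) :> B by rewrite scalerBl; ring.
by apply: mB => //; exact: residP.
Qed.

Lemma residD x y : res (x + y) = res x + res y.
Proof. by apply: resid_eq; rewrite scalerDl opprD addrACA; apply: mD; exact: residP. Qed.

Lemma residZ (c : CC) x : res (c *: x) = c * res x.
Proof. by apply: resid_eq; rewrite -scalerA -scalerBr; apply: m_scale; exact: residP. Qed.

Lemma resid_alg (c : CC) : res c%:A = c.
Proof. by apply: resid_eq; rewrite subrr; exact: m0. Qed.

Lemma resid0 : res 0 = 0.
Proof. by rewrite -(scale0r (1 : B)) resid_alg. Qed.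

Lemma residB x y : res (x - y) = res x - res y.
Proof. by rewrite residD -scaleN1r residZ mulN1r. Qed.

Lemma alg_mul (c d : CC) : (c * d)%:A = c%:A * d%:A :> B.
Proof. by rewrite -scalerA -mulr_algl. Qed.

Lemma residM x y : res (x * y) = res x * res y.
Proof.
apply: resid_eq.
have -> : x * y - (res x * res y)%:A =
    (x - (res x)%:A) * y + (res x)%:A * (y - (res y)%:A).
  by rewrite alg_mul mulrBl mulrBr addrA subrK.
by apply: mD; [apply: mMr|apply: mMl]; exact: residP.
Qed.

Lemma resid_eq0 x : (res x = 0) <-> m x.
Proof.
split => [h|h]; last by apply: resid_eq; rewrite scale0r subr0.
by have := residP x; rewrite h scale0r subr0.
Qed.

Lemma resid_sum (T : Type) (s : seq T) (F : T -> B) :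
  res (\sum_(x <- s) F x) = \sum_(x <- s) res (F x).
Proof. by elim: s => [|a s IH]; rewrite ?big_nil ?resid0 // !big_cons residD IH. Qed.

(** * The m-adic topology *)

Section Null.
Variable T : Type.
Implicit Types f g : T -> B.

Lemma cnull0 : cnull m (fun _ : T => 0).
Proof. by move=> k; exists [::] => i []; exact: powm0. Qed.

Lemma cnullD f g : cnull m f -> cnull m g -> cnull m (fun i => f i + g i).
Proof.
move=> hf hg k; have [l1 h1] := hf k; have [l2 h2] := hg k; exists (l1 ++ l2) => i hi.
apply/List.in_or_app; apply: contrapT => /Decidable.not_or[n1 n2]; apply: hi.
by apply: powmD; apply: contrapT => h; [apply/n1/h1|apply/n2/h2].
Qed.

Lemma cnullMl (b : B) f : cnull m f -> cnull m (fun i => b * f i).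
Proof. by move=> hf k; have [l h] := hf k; exists l => i hi; apply: h => /(powmMl b). Qed.

Lemma cnullB f g : cnull m f -> cnull m g -> cnull m (fun i => f i - g i).
Proof.
move=> hf /(cnullMl (-1)) hg; have := cnullD hf hg.
by congr cnull; apply: funext => i; rewrite mulN1r.
Qed.

Lemma cnull_sum (A : eqType) (s : seq A) (F : A -> T -> B) :
  (forall a, a \in s -> cnull m (F a)) -> cnull m (fun i => \sum_(a <- s) F a i).
Proof.
elim: s => [|a s IH] H.
  by under eq_fun do rewrite big_nil; exact: cnull0.
under eq_fun do rewrite big_cons.
by apply: cnullD; [apply: H; rewrite inE eqxx|apply: IH => b hb; apply: H; rewrite inE hb orbT].
Qed.

Lemma cnull_incl (y : T -> CC) : fin_supp y -> cnull m (incl B y).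
Proof.
move=> [l hl] k; exists l => i hi; apply: hl => hy; apply: hi.
by rewrite /incl hy scale0r; exact: powm0.
Qed.

End Null.

Definition mlim (T : Type) (s : nat -> T -> B) (w : T -> B) :=
  forall K, exists N, forall n, (N <= n)%N -> forall i, P K (w i - s n i).

Definition mcauchy (T : Type) (s : nat -> T -> B) :=
  forall K, exists N, forall n p, (N <= n)%N -> (N <= p)%N -> forall i, P K (s n i - s p i).

Lemma madic_eq (T : Type) (w w' : T -> B) : (forall K i, P K (w i - w' i)) -> w = w'.
Proof.
move=> h; apply: funext => i; apply/eqP; rewrite -subr_eq0; apply/eqP.
by apply: madic_separated => K; apply: h.
Qed.

Lemma eq_mlim (T : Type) (s t : nat -> T -> B) w :
  (forall n i, s n i = t n i) -> mlim s w -> mlim t w.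
Proof. by move=> e h K; have [N HN] := h K; exists N => n hn i; rewrite -e; apply: HN. Qed.

Lemma mlim_unique (T : Type) (s : nat -> T -> B) w w' : mlim s w -> mlim s w' -> w = w'.
Proof.
move=> h h'; apply: madic_eq => K i; have [N1 H1] := h K; have [N2 H2] := h' K.
apply: (@powm_subtrans _ _ (s (maxn N1 N2) i)); last apply: powm_subC.
  by apply: H1; rewrite leq_maxl.
by apply: H2; rewrite leq_maxr.
Qed.

Lemma mcauchy_mlim (T : Type) (s : nat -> T -> B) : mcauchy s -> exists w, mlim s w.
Proof.
move=> hc.
have /boolp.choice[w hw] : forall i, exists l,
    forall K, exists N, forall n, (N <= n)%N -> P K (s n i - l).
  move=> i; apply: madic_complete => K; have [N HN] := hc K.
  by exists N => n p hn hp; apply: HN.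
exists w => K; have [N HN] := hc K; exists N => n hn i; have [Ni HNi] := hw i K.
apply: (@powm_subtrans _ _ (s (maxn N Ni) i)); first apply: powm_subC.
  by apply: HNi; rewrite leq_maxr.
by apply: HN; rewrite ?leq_maxl.
Qed.

Lemma mlim_cnull (T : Type) (s : nat -> T -> B) w :
  (forall n, cnull m (s n)) -> mlim s w -> cnull m w.
Proof.
move=> hs hw K; have [N HN] := hw K; have [l hl] := hs N K; exists l => i hi.
by apply: hl => h; apply: hi; rewrite -(subrK (s N i) (w i)); apply: powmD => //; apply: HN.
Qed.

Lemma mlimMl (T : Type) (s : nat -> T -> B) w (b : B) :
  mlim s w -> mlim (fun n i => b * s n i) (fun i => b * w i).
Proof. by move=> hs K; have [N H] := hs K; exists N => n hn i; rewrite -mulrBr; apply/powmMl/H. Qed.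

Lemma mlim_sum (T A : Type) (r : seq A) (s : A -> nat -> T -> B) (w : A -> T -> B) :
  (forall a, mlim (s a) (w a)) ->
  mlim (fun n i => \sum_(a <- r) s a n i) (fun i => \sum_(a <- r) w a i).
Proof.
move=> H; elim: r => [|a r IH] K.
  by exists 0%N => n _ i; rewrite !big_nil subrr; exact: powm0.
have [N1 H1] := H a K; have [N2 H2] := IH K; exists (maxn N1 N2) => n; rewrite geq_max.
move=> /andP[h1 h2] i; rewrite !big_cons opprD addrACA.
by apply: powmD; [apply: H1|apply: H2].
Qed.

Lemma mcauchy_series (T : Type) (a : nat -> T -> B) :
  (forall K, exists N, forall l, (N <= l)%N -> forall i, P K (a l i)) ->
  mcauchy (fun n i => \sum_(l < n) a l i).
Proof.
have tail K N n i : (forall l, (N <= l)%N -> P K (a l i)) -> (N <= n)%N ->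
    P K (\sum_(l < n) a l i - \sum_(l < N) a l i).
  move=> h hn; rewrite -!(big_mkord xpredT (fun l => a l i)) (big_cat_nat (leq0n N) hn) /=.
  rewrite addrAC subrr add0r big_nat_cond; apply: (big_ind (P K)); [exact: powm0|exact: powmD|].
  by move=> l /andP[/andP[hl _] _]; apply: h.
move=> h K; have [N HN] := h K; exists N => n p hn hp i.
apply: (@powm_subtrans _ _ (\sum_(l < N) a l i)); last apply: powm_subC.
  by apply: tail => // l /HN; apply.
by apply: tail => // l /HN; apply.
Qed.

Definition lincomb (T : Type) (Q : B -> Prop) (Z : (T -> B) -> Prop) (w : T -> B) :=
  exists s : seq (B * (T -> B)), {in s, forall x, Q x.1 /\ Z x.2} /\
    w = (fun i => \sum_(x <- s) x.1 * x.2 i).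

Section Lincomb.
Variables (T : Type) (Q : B -> Prop) (Z : (T -> B) -> Prop).

Lemma lincomb0 : lincomb Q Z (fun _ => 0).
Proof. by exists [::]; split => //; apply: funext => i; rewrite big_nil. Qed.

Lemma lincombD w v : lincomb Q Z w -> lincomb Q Z v -> lincomb Q Z (fun i => w i + v i).
Proof.
move=> [s1 [H1 ->]] [s2 [H2 ->]]; exists (s1 ++ s2); split.
  by move=> x; rewrite mem_cat => /orP[/H1|/H2].
by apply: funext => i; rewrite big_cat.
Qed.

Lemma lincombMl Q' (b : B) w : (forall y, Q y -> Q' (b * y)) ->
  lincomb Q Z w -> lincomb Q' Z (fun i => b * w i).
Proof.
move=> hQ [s [H ->]]; exists [seq (b * x.1, x.2) | x <- s]; split.
  by move=> _ /mapP[x /H[h1 h2] ->]; split => //; apply: hQ.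
by apply: funext => i; rewrite big_map mulr_sumr; apply: eq_bigr => x _; rewrite mulrA.
Qed.

Lemma lincomb_sum (A : eqType) (r : seq A) (F : A -> T -> B) :
  (forall a, a \in r -> lincomb Q Z (F a)) -> lincomb Q Z (fun i => \sum_(a <- r) F a i).
Proof.
elim: r => [|a r IH] H.
  by have -> : (fun i => \sum_(a <- [::]) F a i) = (fun _ => 0);
    [apply: funext => i; rewrite big_nil|exact: lincomb0].
have -> : (fun i => \sum_(b <- a :: r) F b i) = (fun i => F a i + \sum_(b <- r) F b i).
  by apply: funext => i; rewrite big_cons.
apply: lincombD; first by apply: H; rewrite inE eqxx.
by apply: IH => b hb; apply: H; rewrite inE hb orbT.
Qed.

End Lincomb.

Lemma lincomb_powm (T : Type) K Z (w : T -> B) : lincomb (P K) Z w -> forall i, P K (w i).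
Proof. by move=> [s [H ->]] i; apply: powm_sum => x /H[h _]; apply: powmMr. Qed.

Lemma powm_depth K x : x != 0 -> P K x ->
  exists2 d, P (K + d) x & forall t, P (K + t) x -> (t <= d)%N.
Proof.
move=> x0 hx.
have [k0 hk0] : exists k0, ~ P (K + k0) x.
  apply/existsNP => hall; move/eqP: x0; apply; apply: madic_separated => k.
  exact: powm_le (leq_addl K k) (hall k).
have ex : exists t, `[< P (K + t) x >] by exists 0%N; apply/asboolP; rewrite addn0.
have ub t : `[< P (K + t) x >] -> (t <= k0)%N.
  move=> /asboolP ht; rewrite leqNgt; apply/negP => /ltnW hlt; apply: hk0.
  by apply: powm_le ht; rewrite leq_add2l.
by case: (ex_maxnP ex ub) => d /asboolP hd dmax; exists d => // t /asboolP /dmax.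
Qed.

(* Since m^K is finitely generated, g = sum_r s_r c_r with c_r(i) chosen from the
   deepest power of m containing g(i); this keeps every c_r m-adically null. *)
Lemma cnull_lincomb (T : Type) K (g : T -> B) : cnull m g -> (forall i, P K (g i)) ->
  lincomb (P K) (@cnull B m T) g.
Proof.
move=> hg hK; have [s [hs1 hs2]] := powm_generators K.
have /boolp.choice[c hc] : forall i, exists c : nat -> B,
    g i = \sum_(r < size s) s`_r * c r /\ forall L r, P (K + L) (g i) -> P L (c r).
  move=> i; have [gi0|gi0] := eqVneq (g i) 0.
    exists (fun _ => 0); split => [|L r _]; last exact: powm0.
    by rewrite gi0 big1 // => r _; rewrite mulr0.
  have [d hd dmax] := powm_depth gi0 (hK i).
  have [c [hc1 hc2]] := hs2 _ _ hd; exists c; split => // L r /dmax hL.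
  exact: powm_le hL (hc1 r).
exists [seq (s`_r, fun i => c i r) | r <- iota 0 (size s)]; split.
  move=> _ /mapP[r _ ->] /=; split => // L.
  have [l hl] := hg (K + L)%N; exists l => i hi; apply: hl => h; apply: hi.
  by have [_ /(_ L r h)] := hc i.
by apply: funext => i; rewrite big_map big_iota0; have [-> _] := hc i.
Qed.

Section BLinear.
Variables (J I : Type) (phi : (J -> B) -> (I -> B)).
Hypothesis phiD : forall f g, cnull m f -> cnull m g ->
  phi (fun j => f j + g j) = (fun i => phi f i + phi g i).
Hypothesis phiMl : forall (b : B) f, cnull m f ->
  phi (fun j => b * f j) = (fun i => b * phi f i).

Lemma phi0 : phi (fun _ => 0) = (fun _ => 0).
Proof.
have := phiMl 0 (@cnull0 J).
have -> : (fun _ : J => (0 : B) * 0) = (fun _ => 0) by apply: funext => j; rewrite mul0r.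
by move=> ->; apply: funext => i; rewrite mul0r.
Qed.

Lemma phiB f g : cnull m f -> cnull m g ->
  phi (fun j => f j - g j) = (fun i => phi f i - phi g i).
Proof.
move=> hf hg; have -> : (fun j => f j - g j) = (fun j => f j + (-1) * g j).
  by apply: funext => j; rewrite mulN1r.
by rewrite phiD ?phiMl //; [apply: funext => i; rewrite mulN1r|apply: cnullMl].
Qed.

Lemma phi_sum (A : eqType) (r : seq A) (F : A -> J -> B) :
  (forall a, a \in r -> cnull m (F a)) ->
  phi (fun j => \sum_(a <- r) F a j) = (fun i => \sum_(a <- r) phi (F a) i).
Proof.
elim: r => [|a r IH] H.
  have -> : (fun j => \sum_(a <- [::]) F a j) = (fun _ => 0).
    by apply: funext => j; rewrite big_nil.
  by rewrite phi0; apply: funext => i; rewrite big_nil.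
have Hr b : b \in r -> cnull m (F b) by move=> hb; apply: H; rewrite inE hb orbT.
have -> : (fun j => \sum_(b <- a :: r) F b j) = (fun j => F a j + \sum_(b <- r) F b j).
  by apply: funext => j; rewrite big_cons.
rewrite phiD ?IH //; first by apply: funext => i; rewrite big_cons.
  by apply: H; rewrite inE eqxx.
exact: cnull_sum.
Qed.

Lemma phi_lincomb (s : seq (B * (J -> B))) : {in s, forall x, cnull m x.2} ->
  phi (fun j => \sum_(x <- s) x.1 * x.2 j) = (fun i => \sum_(x <- s) x.1 * phi x.2 i).
Proof.
move=> H; rewrite (phi_sum (F := fun x j => x.1 * x.2 j)) => [|x /H]; last exact: cnullMl.
by apply: funext => i; apply: eq_big_seq => x /H hx; rewrite phiMl.
Qed.

Lemma phi_powm K f : cnull m f -> (forall j, P K (f j)) -> forall i, P K (phi f i).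
Proof.
move=> hf hK; have [s [H ->]] := cnull_lincomb hf hK.
rewrite phi_lincomb => [i|x /H[]//]; apply: powm_sum => x /H[h _]; exact: powmMr.
Qed.

End BLinear.

Lemma mseries_powm (T : Type) Z k0 (w : T -> B) : mseries m Z k0 w -> forall i, P k0 (w i).
Proof.
move=> [z [b [k [hz hk _ hcv]]]] i; have [N HN] := hcv k0.
rewrite -(subrK (\sum_(l < N) b l * z l i) (w i)); apply: powmD; first exact: HN.
by apply: powm_sum_ord => l; apply: powmMr; have [h1 h2] := hk l; exact: powm_le h1 h2.
Qed.

Section BlockSeries.
Variables (T : Type) (Z : (T -> B) -> Prop) (k0 : nat).
Variables (blk : nat -> seq (B * (T -> B))) (lev : nat -> nat).
Hypothesis Z0 : Z (fun _ => 0).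
Hypothesis blkP : forall n, {in blk n, forall x, P (lev n) x.1 /\ Z x.2}.
Hypothesis lev_ge : forall n, (k0 <= lev n)%N.
Hypothesis lev_oo : forall K, exists N, forall n, (N <= n)%N -> (K <= lev n)%N.

(* The blocks are concatenated into a single sequence of (coefficient, term, level)
   triples; each block is headed by a zero term so that the first n blocks provide
   at least n terms, and the k-th term is read off the first k+1 blocks. *)
Let pad n := ((0, fun _ => 0), lev n) :: [seq (x, lev n) | x <- blk n].
Let blocks n d := flatten [seq pad k | k <- iota n d].
Let x0 : B * (T -> B) * nat := ((0, fun _ => 0), 0%N).
Let term k := nth x0 (blocks 0 k.+1) k.

Lemma blocks_add n d : blocks 0 (n + d) = blocks 0 n ++ blocks n d.
Proof. by rewrite /blocks iotaD map_cat flatten_cat. Qed.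

Lemma size_blocks n : (n <= size (blocks 0 n))%N.
Proof.
elim: n => [|n IH] //; rewrite -addn1 blocks_add size_cat /= cats0.
exact: leq_add IH _.
Qed.

Lemma mem_blocks y n d : y \in blocks n d -> exists2 k, (n <= k)%N & y \in pad k.
Proof. by move=> /flatten_mapP[k]; rewrite mem_iota => /andP[hk _] hy; exists k. Qed.

Lemma mem_pad y k : y \in pad k -> [/\ y.2 = lev k, P (lev k) y.1.1 & Z y.1.2].
Proof.
rewrite inE => /predU1P[-> /=|/mapP[x /blkP[h1 h2] -> //]].
by split => //; exact: powm0.
Qed.

Lemma nth_blocks n k : (k < n)%N -> nth x0 (blocks 0 n) k = term k.
Proof. by move=> hk; rewrite /term -(subnKC hk) blocks_add nth_cat size_blocks. Qed.

Lemma term_pad k : exists n, term k \in pad n.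
Proof.
have /mem_blocks[n _ hn] := mem_nth x0 (size_blocks k.+1); by exists n.
Qed.

Lemma term_late N k : (size (blocks 0 N) <= k)%N -> exists2 n, (N <= n)%N & term k \in pad n.
Proof.
move=> hk; have hN : (N <= k.+1)%N := leq_trans (size_blocks N) (leqW hk).
suff : term k \in blocks N (k.+1 - N) by move=> /mem_blocks.
have e : blocks 0 k.+1 = blocks 0 N ++ blocks N (k.+1 - N) by rewrite -blocks_add subnKC.
rewrite /term e nth_cat ltnNge hk /=; apply: mem_nth.
by have := size_blocks k.+1; rewrite e size_cat -ltn_subLR.

Qed.

Lemma sum_blocks q i :
  \sum_(y <- blocks 0 q) y.1.1 * y.1.2 i = \sum_(n < q) \sum_(x <- blk n) x.1 * x.2 i.
Proof.
rewrite big_flatten big_map big_iota0; apply: eq_bigr => n _.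
by rewrite big_cons big_map /= mul0r add0r.
Qed.

Lemma blocks_mseries w :
  mlim (fun N i => \sum_(n < N) \sum_(x <- blk n) x.1 * x.2 i) w -> mseries m Z k0 w.
Proof.
move=> hw; exists (fun k => (term k).1.2), (fun k => (term k).1.1), (fun k => (term k).2).
split.
- by move=> k; have [n /mem_pad[]] := term_pad k.
- by move=> k; have [n /mem_pad[-> ? _]] := term_pad k.
- move=> K; have [N0 HN0] := lev_oo K; exists (size (blocks 0 N0)).
  by move=> k /term_late[n hn /mem_pad[-> _ _]]; apply: HN0.
move=> K; have [N0 HN0] := lev_oo K; have [N1 HN1] := hw K.
pose q := maxn N0 N1; exists (size (blocks 0 q)) => N hN i.
have hqN : (q <= N)%N := leq_trans (size_blocks q) hN.
pose G (y : B * (T -> B) * nat) := y.1.1 * y.1.2 i.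
rewrite (eq_bigr (fun k : 'I_N => G (nth x0 (blocks 0 N) k))); last first.
  by move=> k _; rewrite nth_blocks.
have e : blocks 0 N = blocks 0 q ++ blocks q (N - q) by rewrite -blocks_add subnKC.
rewrite big_take_nth ?size_blocks // e take_cat ltnNge hN /= big_cat /G sum_blocks opprD addrA; apply: powmB; first by apply: HN1; exact: leq_maxr.
apply: powm_sum => y /mem_take/mem_blocks[n hn /mem_pad[_ hy _]]; apply: powmMr.
by apply: powm_le hy; apply: HN0; exact: leq_trans (leq_maxl _ _) hn.
Qed.

End BlockSeries.

Lemma lincomb_mseries (T : Type) Z k0 (w : T -> B) :
  Z (fun _ => 0) -> lincomb (P k0) Z w -> mseries m Z k0 w.
Proof.
move=> Z0 [s [H ->]].
apply: (@blocks_mseries _ Z k0 (fun n => if n is 0 then s else [::]) (fun n => k0 + n)%N) => //.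
- by case=> [|n] x //; rewrite addn0; apply: H.
- by move=> n; apply: leq_addr.
- by move=> K; exists K => n hn; exact: leq_trans hn (leq_addl _ _).
move=> K; exists 1%N => [[|N]] // _ i.
rewrite big_ord_recl [X in - (_ + X)]big1 => [|n _]; last by rewrite big_nil.
by rewrite addr0 subrr; exact: powm0.
Qed.

(** * (ii) implies (i) *)

Section FromIso.
Variables (J I : Type) (M : (I -> B) -> Prop) (phi : (J -> B) -> (I -> B)).
Hypothesis hMsub : is_Bsubmodule m M.
Hypothesis hiso : Blin_iso m phi M.
Hypothesis hlead : leading_injective m phi.

Lemma iso_pseudoclosed : pseudoclosed m M.
Proof.
case: hiso => hM hD hMl _ hsurj w [z [b [k [hz hk hk_oo hcv]]]].
have /boolp.choice[f hf] : forall n, exists f, cnull m f /\ phi f = z n.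
  by move=> n; apply/hsurj/hz.
have hfc n : cnull m (f n) by case: (hf n).
pose S n j := \sum_(l < n) b l * f l j.
have hS n : cnull m (S n) by apply: cnull_sum => l _; apply: cnullMl.
have [F hF] : exists F, mlim S F.
  apply/mcauchy_mlim/(@mcauchy_series _ (fun l j => b l * f l j)) => K.
  have [N HN] := hk_oo K; exists N => l hl j.
  by apply: powmMr; have [_ h] := hk l; exact: powm_le (HN l hl) h.
have hFc := mlim_cnull hS hF.
suff <- : phi F = w by apply: hM.
apply: madic_eq => K i; have [N1 H1] := hF K; have [N2 H2] := hcv K.
pose n := maxn N1 N2.
have ephi : phi (S n) = fun i => \sum_(l < n) b l * z l i.
  rewrite /S (phi_sum hD hMl) => [|l _]; last exact: cnullMl.
  by apply: funext => i'; apply: eq_bigr => l _; rewrite hMl //; have [_ ->] := hf l.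
apply: (@powm_subtrans _ _ (phi (S n) i)).
  have := phi_powm hD hMl (cnullB hFc (hS n)) (H1 n (leq_maxl _ _)) i.
  by rewrite (phiB hD hMl hFc (hS n)).
by rewrite ephi; apply/powm_subC/H2; exact: leq_maxr.
Qed.

Lemma iso_quasi_flat : quasi_flat m M.
Proof.
case: hiso => hM hD hMl _ hsurj; case: hMsub => _ hM0 _ _.
move=> w hw /mseries_powm hwm; have [f [hfc hfw]] := hsurj w hw.
pose y j := res (f j).
have hy : fin_supp y.
  have [l hl] := hfc 1%N; exists l => j hj; apply: hl => /powm1/resid_eq0; exact: hj.
pose f1 j := f j - incl B y j.
have hf1c : cnull m f1 by apply: cnullB => //; exact: cnull_incl.
have hf1m j : P 1 (f1 j) by apply/powm1; exact: residP.
have y0 : y = fun _ => 0.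
  apply: hlead => //; first by exists [::].
  have -> : incl B (fun _ : J => 0 : CC) = fun _ => 0.
    by apply: funext => j; rewrite /incl scale0r.
  rewrite (phi0 hMl); apply: funext => i; rewrite /proj resid0.
  have -> : incl B y = fun j => f j - f1 j.
    by apply: funext => j; rewrite /f1 opprB addrC subrK.
  rewrite (phiB hD hMl hfc hf1c) residB hfw.
  have /powm1/resid_eq0 -> := hwm i.
  by have /powm1/resid_eq0 -> := phi_powm hD hMl hf1c hf1m i; rewrite subrr.
have hfm j : P 1 (f j) by apply/powm1/resid_eq0; rewrite -/(y j) y0.
have [s [Hs ef]] := cnull_lincomb hfc hfm.
rewrite -hfw ef (phi_lincomb hD hMl) => [|x /Hs[]//].
apply: lincomb_mseries => //; exists [seq (x.1, phi x.2) | x <- s]; split.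
  by move=> _ /mapP[x /Hs[h1 h2] ->]; split => //; exact: hM.
by apply: funext => i; rewrite big_map.
Qed.

End FromIso.

(** * Bases modulo m *)

Definition resid_indep (I : Type) (S : (I -> B) -> Prop) :=
  forall L, uniq L -> {in L, forall x, S x} -> linindep L (fun x i => res (x i)).

Definition resid_spanned (I : Type) (S : (I -> B) -> Prop) (w : I -> B) :=
  exists L (c : (I -> B) -> CC), [/\ uniq L, {in L, forall x, S x} &
    forall i, res (w i) = \sum_(x <- L) c x * res (x i)].

Lemma resid_indep_bigcup (I : Type) (F : set (set (I -> B))) :
  (forall X, F X -> resid_indep X) -> total_on F subset -> resid_indep (bigcup F (fun X => X)).
Proof.
move=> hF htot L hu /(chain_seq_ub htot) [->|[X hFX hX]]; first by move=> c _ x.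
exact: hF hFX L hu hX.
Qed.

Lemma resid_indep_add (I : Type) (A : (I -> B) -> Prop) w :
  resid_indep A -> ~ resid_spanned A w -> resid_indep (fun x => A x \/ x = w).
Proof.
move=> hA hn L hu hL c hc.
have [hwL|hwL] := boolP (w \in L); last first.
  apply: hA hu _ c hc => x hx; have [//|e] := hL x hx; by move: hwL; rewrite -e hx.
have remA : {in rem w L, forall x, A x}.
  move=> x; rewrite (mem_rem_uniq _ hu) inE => /andP[hxw hx].
  by have [//|e] := hL x hx; move: hxw; rewrite e eqxx.
have hcw : c w = 0.
  apply: contrapT => /eqP hcw; apply: hn.
  exists (rem w L), (fun x => - c x / c w); split => [||i]; [exact: rem_uniq|exact: remA|].
  have := hc i; rewrite (big_rem w hwL) /= addrC => /eqP; rewrite addr_eq0 => /eqP e.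
  rewrite (eq_bigr (fun y => - (c w)^-1 * (c y * res (y i)))); last by move=> y _; ring.
  by rewrite -mulr_sumr e mulrN mulNr opprK mulKf.
have hrem : {in rem w L, forall x, c x = 0}.
  apply: (hA _ (rem_uniq _ hu) remA) => i.
  by have := hc i; rewrite (big_rem w hwL) /= hcw mul0r add0r.
move=> x hx; have [->//|hxw] := eqVneq x w.
by apply: hrem; rewrite (mem_rem_uniq _ hu) inE hxw hx.
Qed.

Lemma exists_resid_basis (I : Type) (M : (I -> B) -> Prop) :
  exists S, [/\ forall x, S x -> M x, resid_indep S & forall w, M w -> resid_spanned S w].
Proof.
pose Pr (S : set (I -> B)) := (forall x, S x -> M x) /\ resid_indep S.
have [A [[hAM hAind] hmax]] : exists A, Pr A /\ forall S, proper A S -> ~ Pr S.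
  apply: Zorn_bigcup => F hFP htot; split; first by move=> x [X /hFP[h _] /h].
  by apply: resid_indep_bigcup htot => X /hFP[].
exists A; split => // w hw; apply: contrapT => hn.
have hwA : ~ A w.
  move=> hA; apply: hn; exists [:: w], (fun _ => 1); split => // [x|i].
    by rewrite inE => /eqP->.
  by rewrite big_seq1 mul1r.
apply: (hmax (fun x => A x \/ x = w)).
  by split => [x hx|/(_ w (or_intror erefl))]; [left|].
by split; [move=> x [/hAM|->]|exact: resid_indep_add].
Qed.

Lemma Bsubmodule_sub (I : Type) (M : (I -> B) -> Prop) w v :
  is_Bsubmodule m M -> M w -> M v -> M (fun i => w i - v i).
Proof.
move=> [_ _ hMD hMM] hw /(hMM (-1)) hv; have := hMD _ _ hw hv.
by congr M; apply: funext => i; rewrite mulN1r.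
Qed.

(* Writing the coefficients b_n in m^(k_n) through fixed generators s_r of m,
   w = sum_r s_r W_r where each W_r is again an m-adic series of elements of M. *)
Lemma mZ_lincomb (I : Type) (M : (I -> B) -> Prop) w :
  pseudoclosed m M -> mZ m M w -> lincomb (P 1) M w.
Proof.
move=> hpc [z [b [k [hz hk hk_oo hcv]]]].
have [s [hs1 hs2]] := powm_generators 1.
have /boolp.choice[c hc] : forall n, exists c : nat -> B,
    (forall r, P (k n).-1 (c r)) /\ b n = \sum_(r < size s) s`_r * c r.
  by move=> n; have [h1 h2] := hk n; apply: hs2; rewrite add1n prednK.
have /boolp.choice[W hW] : forall r, exists Wr, mlim (fun N i => \sum_(l < N) c l r * z l i) Wr.
  move=> r; apply/mcauchy_mlim/(@mcauchy_series _ (fun l i => c l r * z l i)) => K.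
  have [N HN] := hk_oo K.+1; exists N => l /HN hl i; apply: powmMr.
  by have [h _] := hc l; apply: powm_le (h r); case: (k l) hl.
have hWM r : M (W r).
  apply: hpc; exists z, (fun l => c l r), (fun l => (k l).-1); split => //.
  - by move=> n; split => //; have [h _] := hc n.
  - by move=> K; have [N HN] := hk_oo K.+1; exists N => n /HN; case: (k n).
  - exact: hW.
have -> : w = fun i => \sum_(r < size s) s`_r * W r i.
  apply: (mlim_unique hcv); apply: eq_mlim (mlim_sum (index_enum _) (fun r : 'I_(size s) => mlimMl s`_r (hW r))) => n i.
  under eq_bigr do rewrite mulr_sumr; rewrite exchange_big; apply: eq_bigr => l _.
  by have [_ ->] := hc l; rewrite mulr_suml; apply: eq_bigr => r _; rewrite mulrA.
exists [seq (s`_r, W r) | r <- iota 0 (size s)]; split.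
  by move=> _ /mapP[r _ ->]; split; [exact: hs1|exact: hWM].
by apply: funext => i; rewrite big_map big_iota0.
Qed.

Lemma quasi_flat_lincomb (I : Type) (M : (I -> B) -> Prop) w :
  is_Bsubmodule m M -> quasi_flat m M -> pseudoclosed m M ->
  M w -> (forall i, m (w i)) -> lincomb (P 1) M w.
Proof.
move=> [hMc _ _ _] hqf hpc hw hwm; apply: mZ_lincomb => //; apply: hqf => //.
apply: lincomb_mseries; first exact: cnull0.
by apply: cnull_lincomb => [|i]; [exact: hMc|apply/powm1].
Qed.

(** * (i) implies (ii) *)

Section ToIso.
Variables (I : Type) (M : (I -> B) -> Prop) (S : (I -> B) -> Prop).
Hypothesis hMsub : is_Bsubmodule m M.
Hypothesis hqf : quasi_flat m M.
Hypothesis hpc : pseudoclosed m M.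
Hypothesis hSM : forall x, S x -> M x.
Hypothesis hSind : resid_indep S.
Hypothesis hSspan : forall w, M w -> resid_spanned S w.

(* The vector space Y with basis S, encoded by its index type. *)
Definition J := {x : I -> B | `[< S x >]}.

Lemma S_val (j : J) : S (val j).
Proof. exact: asboolW (valP j). Qed.

Lemma S_sub x : S x -> exists j : J, x = val j.
Proof. by move=> hx; exists (Sub x (asboolT hx)). Qed.

Definition zext (A : nmodType) (f : J -> A) (x : I -> B) : A :=
  if insub x is Some j then f j else 0.

Lemma zext_val (A : nmodType) (f : J -> A) j : zext f (val j) = f j.
Proof. by rewrite /zext valK. Qed.

Lemma zext_out (A : nmodType) (f : J -> A) x : ~ S x -> zext f x = 0.
Proof. by move=> hx; rewrite /zext insubF //; apply: asboolF. Qed.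

Lemma zextD (f g : J -> B) x : zext (fun j => f j + g j) x = zext f x + zext g x.
Proof. by rewrite /zext; case: insub => //; rewrite addr0. Qed.

Lemma zextMl b (f : J -> B) x : zext (fun j => b * f j) x = b * zext f x.
Proof. by rewrite /zext; case: insub => //; rewrite mulr0. Qed.

Lemma zext_incl (y : J -> CC) x : zext (incl B y) x = (zext y x)%:A.
Proof. by rewrite /zext /incl; case: insub => //; rewrite scale0r. Qed.

Definition psum (f : J -> B) (L : seq (I -> B)) (i : I) := \sum_(x <- L) zext f x * x i.

Definition covers (f : J -> B) K (L : seq (I -> B)) :=
  [/\ uniq L, {in L, forall x, S x} & forall j, ~ P K (f j) -> val j \in L].

Lemma covers_ex f K : cnull m f -> exists L, covers f K L.
Proof.
move=> hf; have [l hl] := hf K; exists (undup [seq val j | j <- l]).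
split => [|x|j /hl/InP hj]; rewrite ?undup_uniq ?mem_undup ?map_f //.
by move=> /mapP[j _ ->]; exact: S_val.
Qed.

Lemma coversW f K K' L : (K <= K')%N -> covers f K' L -> covers f K L.
Proof. by move=> hK [h1 h2 h3]; split => // j hj; apply: h3 => /(powm_le hK). Qed.

Lemma covers_sup f K L L' : covers f K L -> {subset L <= L'} -> {in L', forall x, S x} ->
  covers f K (undup L').
Proof.
by move=> [_ _ h] sub hS; split => [|x|j /h/sub]; rewrite ?undup_uniq ?mem_undup //; apply: hS.
Qed.

Lemma covers_common K (A : eqType) (s : seq A) (G : A -> J -> B) :
  {in s, forall a, cnull m (G a)} ->
  exists L, [/\ uniq L, {in L, forall x, S x} & {in s, forall a, covers (G a) K L}].
Proof.
elim: s => [|a s IH] H; first by exists [::].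
have [L1 c1] := covers_ex K (H a (mem_head _ _)).
have [L2 [_ h2S h2]] : exists L2, [/\ uniq L2, {in L2, forall x, S x} &
    {in s, forall b, covers (G b) K L2}].
  by apply: IH => b hb; apply: H; rewrite inE hb orbT.
have hS : {in L1 ++ L2, forall x, S x}.
  by move=> x; rewrite mem_cat => /orP[|/h2S//]; case: c1 => _ + _; apply.
exists (undup (L1 ++ L2)); split => [||b]; rewrite ?undup_uniq //.
  by move=> x; rewrite mem_undup; apply: hS.
rewrite inE => /predU1P[->|/h2 hc].
  by apply: covers_sup c1 _ hS => x hx; rewrite mem_cat hx.
by apply: covers_sup hc _ hS => x hx; rewrite mem_cat hx orbT.
Qed.

Lemma covers_out f K L x : covers f K L -> x \notin L -> P K (zext f x).
Proof.
move=> [_ _ hcov] hx; have [/S_sub[j ex]|hS] := pselect (S x); last first.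
  by rewrite zext_out //; exact: powm0.
by rewrite ex zext_val; apply: contrapT => /hcov; rewrite -ex; exact: (negP hx).
Qed.

Lemma psum_covers f K L1 L2 : covers f K L1 -> covers f K L2 ->
  forall i, P K (psum f L1 i - psum f L2 i).
Proof.
move=> c1 c2 i; rewrite /psum (bigID (mem L2)) [X in _ - X](bigID (mem L1)) /=.
have -> : \sum_(x <- L1 | x \in L2) zext f x * x i = \sum_(x <- L2 | x \in L1) zext f x * x i.
  rewrite -big_filter -[RHS]big_filter; apply/perm_big/uniq_perm.
  - by case: c1 => hu _ _; apply: filter_uniq.
  - by case: c2 => hu _ _; apply: filter_uniq.
  - by move=> x; rewrite !mem_filter andbC.
rewrite opprD addrACA subrr add0r.
have outP L L' : covers f K L' -> P K (\sum_(x <- L | x \notin L') zext f x * x i).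
  move=> c; rewrite big_seq_cond; apply: (big_ind (P K)) => [||x /andP[_ hx]].
  - exact: powm0.
  - exact: powmD.
  - exact/powmMr/(covers_out c).
by apply: powmB; apply: outP.
Qed.

Definition sums (f : J -> B) (w : I -> B) :=
  forall K L, covers f K L -> forall i, P K (w i - psum f L i).

Lemma sumsP f w : (forall K, exists2 L, covers f K L & forall i, P K (w i - psum f L i)) ->
  sums f w.
Proof.
move=> h K L hL i; have [L' hL' h2] := h K.
by apply: powm_subtrans (h2 i) _; apply: psum_covers.
Qed.

Lemma sums_ex f : cnull m f -> exists w, sums f w.
Proof.
move=> hf; have /boolp.choice[Ls hLs] : forall n, exists L, covers f n L.
  by move=> n; exact: covers_ex.
have [w hw] : exists w, mlim (fun n => psum f (Ls n)) w.
  apply: mcauchy_mlim => K; exists K => n p hn hp i.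
  by apply: psum_covers; apply: coversW (hLs _).
exists w; apply: sumsP => K; have [N HN] := hw K; exists (Ls (maxn N K)).
  by apply: coversW (hLs _); exact: leq_maxr.
by move=> i; apply: HN; exact: leq_maxl.
Qed.

Lemma sums_unique f w w' : cnull m f -> sums f w -> sums f w' -> w = w'.
Proof.
move=> hf h h'; apply: madic_eq => K i; have [L hL] := covers_ex K hf.
by apply: powm_subtrans (h _ _ hL i) _; apply/powm_subC/h'.
Qed.

(* The m-adic sum of the f(x) x over x in S; junk value 0 when f is not null. *)
Definition bsum (f : J -> B) : I -> B := epsilon (inhabits (fun _ => 0)) (sums f).

Lemma bsumP f : cnull m f -> sums f (bsum f).
Proof. by move=> hf; apply: epsilon_spec; apply: sums_ex. Qed.

Lemma bsum_eq f w : cnull m f -> sums f w -> bsum f = w.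
Proof. by move=> hf; apply: sums_unique hf (bsumP hf). Qed.

Lemma bsumD f g : cnull m f -> cnull m g ->
  bsum (fun j => f j + g j) = (fun i => bsum f i + bsum g i).
Proof.
move=> hf hg; apply: bsum_eq; first exact: cnullD.
apply: sumsP => K; have [L1 c1] := covers_ex K hf; have [L2 c2] := covers_ex K hg.
have hS : {in L1 ++ L2, forall x, S x}.
  by move=> x; rewrite mem_cat => /orP[]; [case: c1 => _ + _|case: c2 => _ + _]; apply.
have cf : covers f K (undup (L1 ++ L2)).
  by apply: covers_sup c1 _ hS => x hx; rewrite mem_cat hx.
have cg : covers g K (undup (L1 ++ L2)).
  by apply: covers_sup c2 _ hS => x hx; rewrite mem_cat hx orbT.
exists (undup (L1 ++ L2)).
  case: cf => hu hLS hcf; split => // j hj; apply: contrapT => hn; apply: hj.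
  by apply: powmD; apply: contrapT => /[dup] h; [move/hcf|case: cg => _ _ /(_ j h)].
move=> i; have -> : psum (fun j => f j + g j) (undup (L1 ++ L2)) i =
    psum f (undup (L1 ++ L2)) i + psum g (undup (L1 ++ L2)) i.
  by rewrite /psum -big_split; apply: eq_bigr => x _; rewrite zextD mulrDl.
by rewrite opprD addrACA; apply: powmD; [apply: (bsumP hf)|apply: (bsumP hg)].
Qed.

Lemma bsumMl (b : B) f : cnull m f -> bsum (fun j => b * f j) = (fun i => b * bsum f i).
Proof.
move=> hf; apply: bsum_eq; first exact: cnullMl.
apply: sumsP => K; have [L [hu hS hcov]] := covers_ex K hf; exists L.
  by split => // j hj; apply: hcov => /(powmMl b).
move=> i; have -> : psum (fun j => b * f j) L i = b * psum f L i.
  by rewrite /psum mulr_sumr; apply: eq_bigr => x _; rewrite zextMl mulrA.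
by rewrite -mulrBr; apply/powmMl/(bsumP hf).
Qed.

Lemma bsum_fin f L : cnull m f -> uniq L -> {in L, forall x, S x} ->
  (forall j, f j <> 0 -> val j \in L) -> bsum f = psum f L.
Proof.
move=> hf hu hS hsupp; apply: bsum_eq => // K L' hL' i; apply: psum_covers => //.
by split => // j hj; apply: hsupp => e; apply: hj; rewrite e; exact: powm0.
Qed.

Lemma bsum_incl (y : J -> CC) L : uniq L -> {in L, forall x, S x} ->
  (forall j, y j <> 0 -> val j \in L) -> bsum (incl B y) = psum (incl B y) L.
Proof.
move=> hu hS hy; apply: bsum_fin => // [|j hj]; last first.
  by apply: hy => e; apply: hj; rewrite /incl e scale0r.
apply: cnull_incl; exists (pmap insub L) => j /hy hj.
by apply/InP; rewrite mem_pmap_sub.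
Qed.

Lemma resid_psum_incl (y : J -> CC) L i :
  res (psum (incl B y) L i) = \sum_(x <- L) zext y x * res (x i).
Proof.
by rewrite /psum resid_sum; apply: eq_bigr => x _; rewrite residM zext_incl resid_alg.
Qed.

Lemma bsum_M f : cnull m f -> M (bsum f).
Proof.
move=> hf; have hM0 : M (fun _ => 0) by case: hMsub.
have /boolp.choice[Ls hLs] : forall n, exists L, covers f n L.
  by move=> n; exact: covers_ex.
pose fix U n := if n is n'.+1 then U n' ++ [seq x <- Ls n' | x \notin U n'] else [::].
have US n : {in U n, forall x, S x}.
  elim: n => [|n IH] x //=; rewrite mem_cat => /orP[/IH//|].
  by rewrite mem_filter => /andP[_]; have [_ h _] := hLs n; apply: h.
have Uu n : uniq (U n).
  elim: n => [|n IH] //=; rewrite cat_uniq IH filter_uniq ?andbT; last by case: (hLs n).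
  by apply/hasPn => x; rewrite mem_filter => /andP[].
have Ucov n : covers f n (U n.+1).
  split => // j hj /=; rewrite mem_cat mem_filter; have [_ _ /(_ j hj) ->] := hLs n.
  by rewrite andbT orbN.
apply: hpc; apply: (@blocks_mseries _ M 0
  (fun n => [seq (zext f x, x) | x <- Ls n & x \notin U n]) (fun n => n.-1)) => //.
- move=> n y /mapP[x]; rewrite mem_filter => /andP[hxU hxL] ->.
  split; last by apply/hSM; have [_ h _] := hLs n; apply: h.
  by case: n hxU hxL => [|n] hxU _ //; exact: covers_out (Ucov n) hxU.
- by move=> K; exists K.+1 => -[].
move=> K; exists K.+1 => N hN i.
have -> : \sum_(n < N) \sum_(x <- [seq (zext f x, x) | x <- Ls n & x \notin U n]) x.1 * x.2 i
    = psum f (U N) i.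
  elim: N {hN} => [|N IH]; first by rewrite big_ord0 /psum big_nil.
  by rewrite big_ord_recr /= IH /psum big_cat big_map.
by case: N hN => // N hN; apply: (bsumP hf); exact: coversW (Ucov N).
Qed.

Lemma bsum_lead_inj : leading_injective m bsum.
Proof.
move=> y1 y2 [l1 h1] [l2 h2] e.
pose L := undup [seq val j | j <- l1 ++ l2].
have hu : uniq L := undup_uniq _.
have hS : {in L, forall x, S x} by move=> x; rewrite mem_undup => /mapP[j _ ->]; exact: S_val.
have hL j : j \in l1 ++ l2 -> val j \in L by move=> hj; rewrite mem_undup map_f.
have hy1 j : y1 j <> 0 -> val j \in L by move=> /h1/InP hj; apply: hL; rewrite mem_cat hj.
have hy2 j : y2 j <> 0 -> val j \in L by move=> /h2/InP hj; apply: hL; rewrite mem_cat hj orbT.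
have hc i : \sum_(x <- L) (zext y1 x - zext y2 x) * res (x i) = 0.
  have := congr1 (@^~ i) e; rewrite /proj (bsum_incl hu hS hy1) (bsum_incl hu hS hy2).
  rewrite !resid_psum_incl => /eqP; rewrite -subr_eq0 -sumrB => /eqP e0.
  by rewrite -[RHS]e0; apply: eq_bigr => x _; rewrite mulrBl.
apply: funext => j; have [hj|hj] := boolP (val j \in L).
  apply/eqP; rewrite -subr_eq0 -(zext_val y1) -(zext_val y2).
  exact/eqP/(hSind hu hS hc).
have z (y : J -> CC) : (forall j, y j <> 0 -> val j \in L) -> y j = 0.
  by move=> hy; apply: contrapT => /hy; exact: (negP hj).
by rewrite (z _ hy1) (z _ hy2).
Qed.

Lemma bsum_approx w : M w -> exists2 y : J -> CC, fin_supp y &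
  lincomb (P 1) M (fun i => w i - bsum (incl B y) i).
Proof.
move=> hw; have [L [c [hu hLS hres]]] := hSspan hw.
pose y (j : J) := if val j \in L then c (val j) else 0.
have hy j : y j <> 0 -> val j \in L by rewrite /y; case: ifP.
have hys : fin_supp y.
  by exists (pmap insub L) => j /hy hj; apply/InP; rewrite mem_pmap_sub.
exists y => //; apply: quasi_flat_lincomb => //.
  by apply: Bsubmodule_sub => //; apply/bsum_M/cnull_incl.
move=> i; apply/resid_eq0; rewrite residB (bsum_incl hu hLS hy) resid_psum_incl hres.
apply/eqP; rewrite subr_eq0; apply/eqP; apply: eq_big_seq => x hx.
by have [j ex] := S_sub (hLS x hx); rewrite ex zext_val /y -ex hx.
Qed.

Definition approx_at (h : I -> B) K (g : J -> B) :=
  cnull m g /\ lincomb (P K) M (fun i => h i - bsum g i).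

Lemma approx_at_step h K g : approx_at h K g ->
  exists2 g', approx_at h K.+1 g' & forall j, P K (g' j - g j).
Proof.
move=> [hg [l [Hl el]]].
have /boolp.choice[ys hys] : forall w, exists y : J -> CC, M w ->
    fin_supp y /\ lincomb (P 1) M (fun i => w i - bsum (incl B y) i).
  move=> w; have [/bsum_approx[y hy1 hy2]|nM] := pselect (M w); first by exists y.
  by exists (fun _ => 0) => /nM.
have hyc x : x \in l -> cnull m (incl B (ys x.2)).
  by move=> /Hl[_ /hys[/cnull_incl]].
pose dg j := \sum_(x <- l) x.1 * incl B (ys x.2) j.
have hdg : cnull m dg by apply: cnull_sum => x /hyc; apply: cnullMl.
exists (fun j => g j + dg j); last first.
  by move=> j; rewrite addrC addKr; apply: powm_sum => x /Hl[hx _]; apply: powmMr.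
split; first exact: cnullD.
have -> : (fun i => h i - bsum (fun j => g j + dg j) i) =
    (fun i => \sum_(x <- l) x.1 * (x.2 i - bsum (incl B (ys x.2)) i)).
  apply: funext => i; rewrite (bsumD hg hdg) /dg.
  rewrite (phi_sum bsumD bsumMl (F := fun x j => x.1 * incl B (ys x.2) j)); last first.
    by move=> x /hyc; apply: cnullMl.
  have /= eli := congr1 (@^~ i) el.
  rewrite opprD addrA eli -sumrB; apply: eq_big_seq => x /hyc hx.
  by rewrite bsumMl // mulrBr.
apply: lincomb_sum => x /[dup] /Hl[hx1 /hys[_ hx2]] _.
by apply: lincombMl hx2 => a ha; rewrite -addn1; apply: powm_mul.
Qed.

Lemma bsum_surj h : M h -> exists f, cnull m f /\ bsum f = h.
Proof.
move=> hh.
have /boolp.choice[st hst] : forall p : nat * (J -> B), exists g',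
    approx_at h p.1 p.2 -> approx_at h p.1.+1 g' /\ forall j, P p.1 (g' j - p.2 j).
  move=> [K g]; have [/approx_at_step[g' h1 h2]|nA] := pselect (approx_at h K g).
    by exists g'.
  by exists g => /nA.
pose fix gs n := if n is n'.+1 then st (n', gs n') else fun _ => 0.
have hgs n : approx_at h n (gs n).
  elim: n => [|n IH]; last by have [] := hst (n, gs n) IH.
  split; first exact: cnull0.
  rewrite /= (phi0 bsumMl); exists [:: (1, h)]; split; first by move=> x; rewrite inE => /eqP->.
  by apply: funext => i; rewrite big_seq1 mul1r subr0.
have hgsS n j : P n (gs n.+1 j - gs n j) by have [_ /(_ j)] := hst (n, gs n) (hgs n).
have hca : mcauchy (fun n j => \sum_(l < n) (gs l.+1 j - gs l j)).
  apply: (@mcauchy_series _ (fun l j => gs l.+1 j - gs l j)) => K.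
  by exists K => l hl j; apply: powm_le hl (hgsS l j).
have [G hG] : exists G, mlim gs G.
  have [G hG] := mcauchy_mlim hca; exists G; apply: eq_mlim hG => n j.
  by rewrite -(big_mkord xpredT (fun l => gs l.+1 j - gs l j)) (@telescope_sumr _ 0 n (fun l => gs l j)) //= subr0.
have hGc : cnull m G by apply: mlim_cnull hG => n; case: (hgs n).
exists G; split => //; apply: madic_eq => K i.
have [N HN] := hG K; pose n := maxn N K; have [hgn hc] := hgs n.
apply: (@powm_subtrans _ _ (bsum (gs n) i)).
  have := phi_powm bsumD bsumMl (cnullB hGc hgn) (HN n (leq_maxl _ _)) i.
  by rewrite (phiB bsumD bsumMl hGc hgn).
by apply/powm_subC/(powm_le (leq_maxr N K)); exact: lincomb_powm hc i.
Qed.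

Lemma bsum_leading g L : cnull m g -> uniq L -> {in L, forall x, S x} ->
  (forall j, ~ m (g j) -> val j \in L) ->
  forall i, m (bsum g i - \sum_(x <- L) (zext (fun j => res (g j)) x * res (x i))%:A).
Proof.
move=> hg hu hS hL i; pose c j := res (g j).
have hcL j : c j <> 0 -> val j \in L by move=> hj; apply: hL => /resid_eq0.
have hic : cnull m (incl B c).
  by apply: cnull_incl; exists (pmap insub L) => j /hcL hj; apply/InP; rewrite mem_pmap_sub.
have -> : bsum g i = bsum (fun j => g j - incl B c j) i + psum (incl B c) L i.
  by rewrite (phiB bsumD bsumMl hg hic) (bsum_incl hu hS hcL) subrK.
rewrite -addrA; apply: mD.
  apply/powm1; apply: (phi_powm bsumD bsumMl (cnullB hg hic)) => j; exact/powm1/residP.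
rewrite /psum -sumrB; apply: (big_ind m) => [||x _]; [exact: m0|exact: mD|].
by rewrite zext_incl alg_mul -mulrBr; apply: mMl; exact: residP.
Qed.

(* If bsum d = 0 and d is m^K-valued, write d = sum_y a_y g_y with a_y in m^K; the
   residues of bsum(g_y) then show that the coefficients beta_x of the basis residues
   lie in m^(K+1), and so does d. *)
Lemma bsum_kernel_step d K : cnull m d -> bsum d = (fun _ => 0) ->
  (forall j, P K (d j)) -> forall j, P K.+1 (d j).
Proof.
move=> hd hd0 hK; have [s [Hs ed]] := cnull_lincomb hd hK.
have [L [hu hLS hLc]] := covers_common 1 (G := snd) (fun y (hy : y \in s) => proj2 (Hs y hy)).
pose beta x := \sum_(y <- s) y.1 * (zext (fun j => res (y.2 j)) x)%:A.
have key i : P K.+1 (\sum_(x <- L) res (x i) *: beta x).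
  have -> : \sum_(x <- L) res (x i) *: beta x = \sum_(y <- s) y.1 *
      \sum_(x <- L) (zext (fun j => res (y.2 j)) x * res (x i))%:A.
    under eq_bigr do rewrite scaler_sumr; rewrite exchange_big; apply: eq_bigr => y _.
    by rewrite mulr_sumr; apply: eq_bigr => x _; rewrite scalerAr scalerA [res _ * _]mulrC.
  have e0 : \sum_(y <- s) y.1 * bsum y.2 i = 0.
    by have /= := congr1 (@^~ i) hd0; rewrite ed (phi_lincomb bsumD bsumMl) // => y /Hs[].
  rewrite -[X in P _ X]subr0 -[X in _ - X]e0 -sumrB.
  apply: powm_sum => y /[dup] /Hs[hy1 hy2] hy.
  rewrite -mulrBr -opprB mulrN; apply/powmN; rewrite -addn1; apply: powm_mul hy1 _.
  apply/powm1/bsum_leading => // j hj; have [_ _ hc] := hLc y hy.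
  by apply: hc => /powm1.
have hbeta : {in L, forall x, P K.+1 (beta x)}.
  apply: (linindep_coef (@powm0 K.+1) (@powmD K.+1) _ hu (hSind hu hLS) key).
  by move=> c a; rewrite -mulr_algl; apply: powmMl.
move=> j; have -> : d j = \sum_(y <- s) y.1 * (y.2 j - (res (y.2 j))%:A) +
    \sum_(y <- s) y.1 * (res (y.2 j))%:A.
  by rewrite ed -big_split; apply: eq_bigr => y _ /=; rewrite -mulrDr subrK.
apply: powmD.
  apply: powm_sum => y /Hs[hy1 _]; rewrite -addn1; apply: powm_mul hy1 _.
  exact/powm1/residP.
have [hj|hj] := boolP (val j \in L).
  by have := hbeta _ hj; rewrite /beta; under eq_bigr do rewrite zext_val.
rewrite big_seq big1 => [|y hy]; first exact: powm0.
have [_ _ hc] := hLc y hy; suff -> : res (y.2 j) = 0 by rewrite scale0r mulr0.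
by apply/resid_eq0/powm1; apply: contrapT => /hc; exact: (negP hj).
Qed.

Lemma bsum_inj f g : cnull m f -> cnull m g -> bsum f = bsum g -> f = g.
Proof.
move=> hf hg e; have hd := cnullB hf hg.
have hd0 : bsum (fun j => f j - g j) = fun _ => 0.
  by rewrite (phiB bsumD bsumMl hf hg) e; apply: funext => i; rewrite subrr.
apply: madic_eq => K; elim: K => [|K IH] j //.
exact: bsum_kernel_step hd hd0 IH j.
Qed.

Lemma bsum_iso : Blin_iso m bsum M.
Proof. by split; [exact: bsum_M|exact: bsumD|exact: bsumMl|exact: bsum_inj|exact: bsum_surj]. Qed.

End ToIso.

End Base.

Theorem proposition2p36 (B : comAlgType CC) (m : B -> Prop) (I : Type)
    (M : (I -> B) -> Prop) :
  deformation_base m ->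
  is_Bsubmodule m M ->
  ((quasi_flat m M /\ pseudoclosed m M) <->
   exists (J : Type) (phi : (J -> B) -> (I -> B)),
     Blin_iso m phi M /\ leading_injective m phi).
Proof.
move=> hdb hMsub; split.
- move=> [hqf hpc]; have [S [hSM hSind hSspan]] := exists_resid_basis m M.
  exists (J S), (@bsum B m I S); split.
    exact (bsum_iso hdb hMsub hqf hpc hSM hSind hSspan).
  exact (bsum_lead_inj hdb hSind).
- move=> [J [phi [hiso hlead]]]; split.
    exact (iso_quasi_flat hdb hMsub hiso hlead).
  exact (iso_pseudoclosed hdb hiso).
Qed.
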